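(* (i) Let $I,J$ be sets and $R\colon I\times J\to[0,1]$ a fuzzy relation. Then the mappings $f_R\colon[0,1]^I\to[0,1]^J$ and $g_R\colon[0,1]^J\to[0,1]^I$ satisfy $f_R\leftrightarrows g_R$ (as maps between the power Pavelka algebras $[0,1]^I$ and $[0,1]^J$). (ii) Let $\mathbf A$ and $\mathbf B$ be semisimple Pavelka algebras and let $f\colon A\to B$, $g\colon B\to A$ satisfy $f\leftrightarrows g$. Then there exists a fuzzy relation $R\colon \mathrm{Spec_M}\mathbf A\times\mathrm{Spec_M}\mathbf B\to[0,1]$ (namely $R(F,G)=\bigwedge_{a\in A}(f(a)/G\rightarrow a/F)$) such that $n_{\mathbf B}(f(x))=f_R(n_{\mathbf A}(x))$ for all $x\in A$ and $n_{\mathbf A}(g(y))=g_R(n_{\mathbf B}(y))$ for all $y\in B$, where $f_R,g_R$ are taken with $I=\mathrm{Spec_M}\mathbf A$, $J=\mathrm{Spec_M}\mathbf B$.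
   Context: An MV-algebra $(A;\oplus,\neg,0)$ carries derived operations $1=\neg0$, $x\cdot y=\neg(\neg x\oplus\neg y)$, $x\rightarrow y=\neg x\oplus y$, $x\vee y=\neg(\neg x\oplus y)\oplus y$, $x\wedge y=\neg(\neg x\vee\neg y)$, and order $x\le y$ iff $\neg x\oplus y=1$. The standard MV-algebra is $[0,1]$ with $x\oplus y=\min\{x+y,1\}$, $\neg x=1-x$ (so $x\cdot y=\max\{0,x+y-1\}$, $x\rightarrow y=\min\{1,1-x+y\}$). A Pavelka algebra is $\mathbf A=(A;\oplus,\neg,\{\mathbf r\mid r\in[0,1]\cap\mathbb Q\})$ with $(A;\oplus,\neg,\mathbf 0)$ an MV-algebra, $\mathbf r\oplus\mathbf s=\mathbf t$ whenever $\min\{r+s,1\}=t$, and $\neg\mathbf r=\mathbf s$ whenever $1-r=s$. The standard Pavelka algebra is $[0,1]$ with $\mathbf r$ interpreted as $r$; $[0,1]^I$ is its power (componentwise, constants diagonal). A filter of a Pavelka algebra is a filter of its MV-reduct (a nonempty up-set closed under $\cdot$); a maximal filter is a maximal proper filter; $\mathrm{Spec_M}\mathbf A$ is the set of maximal filters. For $F\in\mathrm{Spec_M}\mathbf A$ the quotient $\mathbf A/F$ embeds uniquely into the standard Pavelka algebra and $x/F$ is identified with its image in $[0,1]$. $\mathbf A$ is semisimple if its MV-reduct is a subdirect product of simple MV-algebras. The natural embedding is $n_{\mathbf A}\colon A\to[0,1]^{\mathrm{Spec_M}\mathbf A}$, $n_{\mathbf A}(x)(F)=x/F$. For Pavelka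 algebras $\mathbf A,\mathbf B$ and maps $f\colon A\to B$, $g\colon B\to A$: $f\leftrightarrows g$ ($f$ is a strong left adjoint of $g$) means that $f,g$ are monotone, $x\le f(y)$ iff $g(x)\le y$ for all $y\in A$, $x\in B$, and $\mathbf r\rightarrow f(x)=f(\mathbf r\rightarrow x)$ for all $x\in A$ and all constants $\mathbf r$ (equivalently $\mathbf r\cdot g(y)=g(\mathbf r\cdot y)$ for all $y\in B$ and constants $\mathbf r$). For $R\colon I\times J\to[0,1]$: $f_R(x)(j)=\bigwedge_{i\in I}(R(i,j)\rightarrow x(i))$ for $x\in[0,1]^I$, $j\in J$; $g_R(y)(i)=\bigvee_{j\in J}(R(i,j)\cdot y(j))$ for $y\in[0,1]^J$, $i\in I$ (operations of the standard MV-algebra). *)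

From Stdlib Require Import Reals Lra QArith Qreals.
From Stdlib Require Import Classical ClassicalEpsilon FunctionalExtensionality ProofIrrelevance.
Open Scope R_scope.

Definition U01 := {r : R | 0 <= r <= 1}.

Lemma U01_eq (a b : U01) : proj1_sig a = proj1_sig b -> a = b.
Proof. destruct a, b; simpl; intros ->; f_equal; apply proof_irrelevance. Qed.

Definition Rimp (a b : R) : R := Rmin 1 (1 - a + b).
Definition Rtimes (a b : R) : R := Rmax 0 (a + b - 1).

(* infimum / supremum in the complete lattice [0,1] of (the part in [0,1] of) P;
   inf of the empty family is 1, sup of the empty family is 0 *)
Definition is_inf01 (P : R -> Prop) (r : R) : Prop :=
  0 <= r <= 1 /\ (forall z, P z -> 0 <= z <= 1 -> r <= z) /\
  (forall s, 0 <= s <= 1 -> (forall z, P z -> 0 <= z <= 1 -> s <= z) -> s <= r).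
Definition is_sup01 (P : R -> Prop) (r : R) : Prop :=
  0 <= r <= 1 /\ (forall z, P z -> 0 <= z <= 1 -> z <= r) /\
  (forall s, 0 <= s <= 1 -> (forall z, P z -> 0 <= z <= 1 -> z <= s) -> r <= s).

Definition inf01 (P : R -> Prop) : R := epsilon (inhabits 0) (is_inf01 P).
Definition sup01 (P : R -> Prop) : R := epsilon (inhabits 0) (is_sup01 P).

Lemma inf01_exists P : exists r, is_inf01 P r.
Proof.
  set (L := fun s => 0 <= s <= 1 /\ forall z, P z -> 0 <= z <= 1 -> s <= z).
  destruct (completeness L) as [r [Hub Hl]].
  - exists 1; intros s [Hs _]; lra.
  - exists 0; split; [lra|]; intros z _ Hz; lra.
  - exists r. assert (H0 : 0 <= r) by (apply Hub; split; [lra|]; intros z _ Hz; lra).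
    assert (H1 : r <= 1) by (apply Hl; intros s [Hs _]; lra).
    split; [lra|]; split.
    + intros z Pz Hz; apply Hl; intros s [_ Hs]; apply Hs; auto.
    + intros s Hs Hb; apply Hub; split; auto.
Qed.

Lemma sup01_exists P : exists r, is_sup01 P r.
Proof.
  set (S := fun z => (P z /\ 0 <= z <= 1) \/ z = 0).
  destruct (completeness S) as [r [Hub Hl]].
  - exists 1; intros z [[_ Hz]| ->]; lra.
  - exists 0; right; reflexivity.
  - exists r. assert (H0 : 0 <= r) by (apply Hub; right; reflexivity).
    assert (H1 : r <= 1) by (apply Hl; intros z [[_ Hz]| ->]; lra).
    split; [lra|]; split.
    + intros z Pz Hz; apply Hub; left; auto.
    + intros s Hs Hb; apply Hl; intros z [[Pz Hz]| ->]; [apply Hb; auto | lra].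
Qed.

Lemma inf01_spec P : is_inf01 P (inf01 P).
Proof. unfold inf01; apply epsilon_spec, inf01_exists. Qed.
Lemma sup01_spec P : is_sup01 P (sup01 P).
Proof. unfold sup01; apply epsilon_spec, sup01_exists. Qed.

Lemma inf01_range P : 0 <= inf01 P <= 1.
Proof. apply (proj1 (inf01_spec P)). Qed.
Lemma sup01_range P : 0 <= sup01 P <= 1.
Proof. apply (proj1 (sup01_spec P)). Qed.

Record MVAlgebra := {
  mv_car :> Type;
  mv_oplus : mv_car -> mv_car -> mv_car;
  mv_neg : mv_car -> mv_car;
  mv_zero : mv_car;
  mv_assoc : forall x y z, mv_oplus x (mv_oplus y z) = mv_oplus (mv_oplus x y) z;
  mv_comm : forall x y, mv_oplus x y = mv_oplus y x;
  mv_zero_r : forall x, mv_oplus x mv_zero = x;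
  mv_negneg : forall x, mv_neg (mv_neg x) = x;
  mv_one_abs : forall x, mv_oplus x (mv_neg mv_zero) = mv_neg mv_zero;
  mv_luk : forall x y, mv_oplus (mv_neg (mv_oplus (mv_neg x) y)) y
                     = mv_oplus (mv_neg (mv_oplus (mv_neg y) x)) x
}.

Arguments mv_oplus {_}. Arguments mv_neg {_}. Arguments mv_zero {_}.

Section Derived.
Context {A : MVAlgebra}.
Definition mv_one : A := mv_neg mv_zero.
Definition mv_times (x y : A) : A := mv_neg (mv_oplus (mv_neg x) (mv_neg y)).
Definition mv_imp (x y : A) : A := mv_oplus (mv_neg x) y.
Definition mv_join (x y : A) : A := mv_oplus (mv_neg (mv_oplus (mv_neg x) y)) y.
Definition mv_meet (x y : A) : A := mv_neg (mv_join (mv_neg x) (mv_neg y)).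
Definition mv_le (x y : A) : Prop := mv_oplus (mv_neg x) y = mv_one.

Definition is_filter (F : A -> Prop) : Prop :=
  (exists x, F x) /\ (forall x y, F x -> mv_le x y -> F y) /\
  (forall x y, F x -> F y -> F (mv_times x y)).
Definition is_proper_filter (F : A -> Prop) : Prop :=
  is_filter F /\ exists x, ~ F x.
Definition is_maximal_filter (F : A -> Prop) : Prop :=
  is_proper_filter F /\
  forall G, is_proper_filter G -> (forall x, F x -> G x) -> forall x, G x -> F x.
End Derived.

Definition mv_hom (A B : MVAlgebra) (h : A -> B) : Prop :=
  (forall x y, h (mv_oplus x y) = mv_oplus (h x) (h y)) /\
  (forall x, h (mv_neg x) = mv_neg (h x)) /\ h mv_zero = mv_zero.

Definition mv_simple (A : MVAlgebra) : Prop :=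
  (mv_zero : A) <> mv_one /\
  forall F : A -> Prop, is_filter F -> (forall x, F x -> x = mv_one) \/ (forall x, F x).

(* semisimple: subdirect product of simple MV-algebras, i.e. an injective
   homomorphism into a product of simple algebras whose projections are onto *)
Definition mv_semisimple (A : MVAlgebra) : Prop :=
  exists (K : Type) (B : K -> MVAlgebra) (e : A -> forall k, B k),
    (forall k, mv_simple (B k)) /\
    (forall k, mv_hom A (B k) (fun a => e a k)) /\
    (forall a b, e a = e b -> a = b) /\
    (forall k (y : B k), exists a, e a k = y).

Definition Q01 := {q : Q | (0 <= q <= 1)%Q}.
Definition q01val (q : Q01) : R := Q2R (proj1_sig q).

Record Pavelka := {
  pv_mv :> MVAlgebra;
  pv_cst : Q01 -> pv_mv;
  pv_cst_zero : forall q : Q01, q01val q = 0 -> pv_cst q = mv_zero;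
  pv_cst_add : forall r s t : Q01, Rmin (q01val r + q01val s) 1 = q01val t ->
                 mv_oplus (pv_cst r) (pv_cst s) = pv_cst t;
  pv_cst_neg : forall r s : Q01, 1 - q01val r = q01val s ->
                 mv_neg (pv_cst r) = pv_cst s
}.
Arguments pv_cst {_}.

Definition pv_semisimple (A : Pavelka) : Prop := mv_semisimple A.

Definition strong_adj (A B : Pavelka) (f : A -> B) (g : B -> A) : Prop :=
  (forall x y : A, mv_le x y -> mv_le (f x) (f y)) /\
  (forall x y : B, mv_le x y -> mv_le (g x) (g y)) /\
  (forall (y : A) (x : B), mv_le x (f y) <-> mv_le (g x) y) /\
  (forall (x : A) (r : Q01), mv_imp (pv_cst r) (f x) = f (mv_imp (pv_cst r) x)).

Lemma Rmin01 a b : 0 <= a <= 1 -> 0 <= b <= 1 -> 0 <= Rmin (a + b) 1 <= 1.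
Proof. intros; unfold Rmin; destruct (Rle_dec _ _); lra. Qed.
Lemma neg01 a : 0 <= a <= 1 -> 0 <= 1 - a <= 1.
Proof. lra. Qed.
Lemma zero01 : 0 <= 0 <= 1.
Proof. lra. Qed.

Definition u_oplus (a b : U01) : U01 :=
  exist _ _ (Rmin01 _ _ (proj2_sig a) (proj2_sig b)).
Definition u_neg (a : U01) : U01 := exist _ _ (neg01 _ (proj2_sig a)).
Definition u_zero : U01 := exist _ 0 zero01.

Lemma q01_range (q : Q01) : 0 <= q01val q <= 1.
Proof.
  destruct q as [q [H0 H1]]; unfold q01val; simpl.
  apply Qle_Rle in H0; apply Qle_Rle in H1.
  replace (Q2R 0) with 0 in H0 by (unfold Q2R; simpl; field).
  replace (Q2R 1) with 1 in H1 by (unfold Q2R; simpl; field).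
  split; lra.
Qed.
Definition u_cst (q : Q01) : U01 := exist _ _ (q01_range q).

Ltac mvsolve := unfold Rmin, Rmax; repeat destruct Rle_dec; lra.

Section Power.
Variable I : Type.
Definition p_oplus (x y : I -> U01) : I -> U01 := fun i => u_oplus (x i) (y i).
Definition p_neg (x : I -> U01) : I -> U01 := fun i => u_neg (x i).
Definition p_zero : I -> U01 := fun _ => u_zero.

Ltac pw := intros; apply functional_extensionality;
           let i := fresh "i" in intro i;
           unfold p_oplus, p_neg, p_zero; apply U01_eq; simpl;
           repeat match goal with x : I -> U01 |- _ =>
             let H := fresh in pose proof (proj2_sig (x i)) as H; simpl in H;
             revert H; generalize (proj1_sig (x i)); clear x end;
           intros; mvsolve.

Lemma p_assoc x y z : p_oplus x (p_oplus y z) = p_oplus (p_oplus x y) z. Proof. pw. Qed.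
Lemma p_comm x y : p_oplus x y = p_oplus y x. Proof. pw. Qed.
Lemma p_zero_r x : p_oplus x p_zero = x. Proof. pw. Qed.
Lemma p_negneg x : p_neg (p_neg x) = x. Proof. pw. Qed.
Lemma p_one_abs x : p_oplus x (p_neg p_zero) = p_neg p_zero. Proof. pw. Qed.
Lemma p_luk x y : p_oplus (p_neg (p_oplus (p_neg x) y)) y
                = p_oplus (p_neg (p_oplus (p_neg y) x)) x. Proof. pw. Qed.

Definition PowerMV : MVAlgebra :=
  {| mv_car := I -> U01; mv_oplus := p_oplus; mv_neg := p_neg; mv_zero := p_zero;
     mv_assoc := p_assoc; mv_comm := p_comm; mv_zero_r := p_zero_r;
     mv_negneg := p_negneg; mv_one_abs := p_one_abs; mv_luk := p_luk |}.

Definition p_cst (q : Q01) : PowerMV := fun _ => u_cst q.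

Lemma p_cst_zero (q : Q01) : q01val q = 0 -> p_cst q = mv_zero.
Proof. intros H; apply functional_extensionality; intro i; apply U01_eq; simpl; auto. Qed.
Lemma p_cst_add (r s t : Q01) : Rmin (q01val r + q01val s) 1 = q01val t ->
  mv_oplus (p_cst r) (p_cst s) = p_cst t.
Proof. intros H; apply functional_extensionality; intro i; apply U01_eq; simpl; auto. Qed.
Lemma p_cst_neg (r s : Q01) : 1 - q01val r = q01val s -> mv_neg (p_cst r) = p_cst s.
Proof. intros H; apply functional_extensionality; intro i; apply U01_eq; simpl; auto. Qed.

Definition PowerPav : Pavelka :=
  {| pv_mv := PowerMV; pv_cst := p_cst; pv_cst_zero := p_cst_zero;
     pv_cst_add := p_cst_add; pv_cst_neg := p_cst_neg |}.
End Power.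

Definition fR {I J : Type} (Rel : I -> J -> U01) (x : I -> R) : J -> R :=
  fun j => inf01 (fun z => exists i, z = Rimp (proj1_sig (Rel i j)) (x i)).
Definition gR {I J : Type} (Rel : I -> J -> U01) (y : J -> R) : I -> R :=
  fun i => sup01 (fun z => exists j, z = Rtimes (proj1_sig (Rel i j)) (y j)).

Definition fR01 {I J : Type} (Rel : I -> J -> U01) (x : PowerPav I) : PowerPav J :=
  fun j => exist _ (fR Rel (fun i => proj1_sig (x i)) j) (inf01_range _).
Definition gR01 {I J : Type} (Rel : I -> J -> U01) (y : PowerPav J) : PowerPav I :=
  fun i => exist _ (gR Rel (fun j => proj1_sig (y j)) i) (sup01_range _).

Definition SpecM (A : Pavelka) : Type := {F : A -> Prop | is_maximal_filter F}.

(* h : A -> [0,1] is (the composite of the quotient map A -> A/F with) an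
   embedding of the Pavelka algebra A/F into the standard Pavelka algebra [0,1]:
   a Pavelka homomorphism into [0,1] identifying exactly the F-congruent elements *)
Definition quotient_embedding (A : Pavelka) (F : A -> Prop) (h : A -> R) : Prop :=
  (forall a, 0 <= h a <= 1) /\
  (forall a b, h (mv_oplus a b) = Rmin (h a + h b) 1) /\
  (forall a, h (mv_neg a) = 1 - h a) /\
  (forall q : Q01, h (pv_cst q) = q01val q) /\
  (forall a b, h a = h b <-> F (mv_times (mv_imp a b) (mv_imp b a))).

(* x/F, identified with its image in [0,1] *)
Definition qval {A : Pavelka} (F : SpecM A) (x : A) : R :=
  epsilon (inhabits 0)
    (fun r => exists h, quotient_embedding A (proj1_sig F) h /\ h x = r).

Definition nmap (A : Pavelka) (x : A) : SpecM A -> R := fun F => qval F x.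

From Stdlib Require Import Reals Lra Lia QArith Qreals.
From Stdlib Require Import Classical ClassicalEpsilon FunctionalExtensionality.
From mathcomp Require classical_sets.
Set Bullet Behavior "Strict Subproofs".
Open Scope R_scope.

(* (i) is residuation in [0,1], [Rtimes r b <= c <-> b <= Rimp r c], applied pointwise under the
   infimum and supremum defining [fR] and [gR]; [Rimp r] commutes with infima.

   (ii) For a maximal filter [F], the value [x/F] is the supremum of the rationals [t] with
   [t ⇒ x ∈ F]; since maximal filters are prime and archimedean this is the unique embedding of
   [A/F] into [0,1]. One half of each identity is immediate from the definition of [R] and the
   unit/counit of the adjunction. For the other half of the identity for [f], take a rational
   [s > f(x)/G]: the elements [(x ⇒ s) ⊙ ((s ⇒ x) ⇒ h)] with [f(h)/G = 1] generate a proper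
   filter (otherwise semisimplicity of [A] and [r ⇒ f(-) = f(r ⇒ -)] would force [f(x)/G >= s]),
   and any maximal filter [F] above it has [R(F,G) → x/F <= s]. The identity for [g] is dual,
   with the elements [(t ⇒ y) ⊙ (d ⇒ y ⊙ ¬t)], [g(d)/F = 0], and semisimplicity of [B]. *)

Notation "x ⊕ y" := (mv_oplus x y) (at level 50, left associativity).
Notation "¬ x" := (mv_neg x) (at level 35, right associativity).
Notation "x ⊙ y" := (mv_times x y) (at level 40, left associativity).
Notation "x ⇒ y" := (mv_imp x y) (at level 55, right associativity).
Notation "x ≤ y" := (mv_le x y) (at level 70).

(** * Arithmetic and filters of MV-algebras *)

Section MV.
Context {A : MVAlgebra}.
Local Notation "0" := (@mv_zero A).
Local Notation "1" := (@mv_one A).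
Implicit Types x y z a b c d u v w : A.

Lemma oplusA x y z : x ⊕ (y ⊕ z) = x ⊕ y ⊕ z. Proof. apply mv_assoc. Qed.
Lemma oplusC x y : x ⊕ y = y ⊕ x. Proof. apply mv_comm. Qed.
Lemma oplus0r x : x ⊕ 0 = x. Proof. apply mv_zero_r. Qed.
Lemma oplus0l x : 0 ⊕ x = x. Proof. rewrite oplusC; apply oplus0r. Qed.
Lemma negK x : ¬ ¬ x = x. Proof. apply mv_negneg. Qed.
Lemma oplus1r x : x ⊕ 1 = 1. Proof. apply mv_one_abs. Qed.
Lemma oplus1l x : 1 ⊕ x = 1. Proof. rewrite oplusC; apply oplus1r. Qed.
Lemma neg1 : ¬ 1 = 0. Proof. unfold mv_one; apply negK. Qed.
Lemma neg0 : ¬ 0 = 1. Proof. reflexivity. Qed.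
Lemma oplus_luk x y : ¬(¬x ⊕ y) ⊕ y = ¬(¬y ⊕ x) ⊕ x. Proof. apply mv_luk. Qed.

Lemma oplusNl x : ¬x ⊕ x = 1.
Proof. pose proof (oplus_luk x 1) as H. rewrite oplus1r, neg1, oplus0l in H. symmetry; exact H. Qed.
Lemma oplusN x : x ⊕ ¬x = 1. Proof. rewrite oplusC; apply oplusNl. Qed.

Lemma mv_le_refl x : x ≤ x. Proof. apply oplusNl. Qed.
Lemma mv_le_oplusr x z : x ≤ x ⊕ z. Proof. unfold mv_le; rewrite oplusA, oplusNl; apply oplus1l. Qed.
Lemma mv_le_oplusl x z : x ≤ z ⊕ x. Proof. rewrite oplusC; apply mv_le_oplusr. Qed.
Lemma mv_le_decomp x y : x ≤ y -> y = ¬(¬y ⊕ x) ⊕ x.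
Proof. unfold mv_le; intros H. rewrite <- oplus_luk, H, neg1, oplus0l; reflexivity. Qed.
Lemma mv_le_trans x y z : x ≤ y -> y ≤ z -> x ≤ z.
Proof.
  intros H1 H2. apply mv_le_decomp in H1; apply mv_le_decomp in H2.
  set (w1 := ¬(¬y ⊕ x)) in H1. set (w2 := ¬(¬z ⊕ y)) in H2.
  rewrite H2, H1. unfold mv_le. rewrite (oplusC w2), (oplusC w1), !oplusA, oplusNl, !oplus1l; reflexivity.
Qed.
Lemma mv_le_antisym x y : x ≤ y -> y ≤ x -> x = y.
Proof.
  intros H1 H2. apply mv_le_decomp in H1. rewrite H1. unfold mv_le in H2.
  rewrite H2, neg1, oplus0l; reflexivity.
Qed.
Lemma mv_le1 x : x ≤ 1. Proof. unfold mv_le; apply oplus1r. Qed.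
Lemma mv_ge0 x : 0 ≤ x. Proof. unfold mv_le; rewrite neg0; apply oplus1l. Qed.
Lemma oplus_monol x y z : x ≤ y -> x ⊕ z ≤ y ⊕ z.
Proof.
  intros H; apply mv_le_decomp in H; set (w := ¬(¬y ⊕ x)) in H; rewrite H.
  rewrite <- oplusA. apply mv_le_oplusl.
Qed.
Lemma oplus_mono x y x' y' : x ≤ x' -> y ≤ y' -> x ⊕ y ≤ x' ⊕ y'.
Proof.
  intros H1 H2; apply mv_le_trans with (x' ⊕ y). apply oplus_monol; auto.
  rewrite (oplusC x'), (oplusC x'); apply oplus_monol; auto.
Qed.
Lemma neg_anti x y : x ≤ y -> ¬y ≤ ¬x.
Proof. unfold mv_le; intros H; rewrite negK, oplusC; exact H. Qed.
Lemma neg_le x y : ¬y ≤ ¬x <-> x ≤ y.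
Proof. split; [intros H; apply neg_anti in H; rewrite !negK in H; exact H| apply neg_anti]. Qed.

Lemma timesC x y : x ⊙ y = y ⊙ x. Proof. unfold mv_times; rewrite oplusC; reflexivity. Qed.
Lemma timesA x y z : x ⊙ (y ⊙ z) = x ⊙ y ⊙ z.
Proof. unfold mv_times; rewrite !negK, oplusA; reflexivity. Qed.
Lemma times1r x : x ⊙ 1 = x. Proof. unfold mv_times; rewrite neg1, oplus0r, negK; reflexivity. Qed.
Lemma times1l x : 1 ⊙ x = x. Proof. rewrite timesC; apply times1r. Qed.
Lemma neg_oplus x y : ¬(x ⊕ y) = ¬x ⊙ ¬y. Proof. unfold mv_times; rewrite !negK; reflexivity. Qed.
Lemma times_monol x y z : x ≤ y -> x ⊙ z ≤ y ⊙ z.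
Proof. intros H. unfold mv_times. apply neg_anti. apply oplus_monol. apply neg_anti; exact H. Qed.
Lemma times_mono x y x' y' : x ≤ x' -> y ≤ y' -> x ⊙ y ≤ x' ⊙ y'.
Proof.
  intros H1 H2; apply mv_le_trans with (x' ⊙ y). apply times_monol; auto.
  rewrite (timesC x'), (timesC x'); apply times_monol; auto.
Qed.
Lemma residuation x y z : x ⊙ y ≤ z <-> x ≤ (y ⇒ z).
Proof. unfold mv_le, mv_times, mv_imp. rewrite negK, oplusA. reflexivity. Qed.
Lemma times_le_of_le_imp x y z : x ≤ (y ⇒ z) -> x ⊙ y ≤ z. Proof. apply residuation. Qed.
Lemma le_imp_of_times_le x y z : x ⊙ y ≤ z -> x ≤ (y ⇒ z). Proof. apply residuation. Qed.
Lemma times_lel x y : x ⊙ y ≤ x.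
Proof. apply residuation. unfold mv_imp. rewrite oplusC. apply mv_le_oplusr. Qed.
Lemma times_ler x y : x ⊙ y ≤ y. Proof. rewrite timesC; apply times_lel. Qed.
Lemma modus_ponens x y : (x ⇒ y) ⊙ x ≤ y. Proof. apply residuation, mv_le_refl. Qed.
Lemma imp1l x : (1 ⇒ x) = x. Proof. unfold mv_imp; rewrite neg1; apply oplus0l. Qed.
Lemma imp1r x : (x ⇒ 1) = 1. Proof. unfold mv_imp; apply oplus1r. Qed.
Lemma imp0l x : (0 ⇒ x) = 1. Proof. unfold mv_imp; rewrite neg0; apply oplus1l. Qed.
Lemma imp0r x : (x ⇒ 0) = ¬x. Proof. unfold mv_imp; apply oplus0r. Qed.
Lemma imp_mono x y x' y' : x' ≤ x -> y ≤ y' -> (x ⇒ y) ≤ (x' ⇒ y').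
Proof. intros; unfold mv_imp; apply oplus_mono; auto; apply neg_anti; auto. Qed.
Lemma mv_ge1_eq x : 1 ≤ x -> x = 1. Proof. intros H; apply mv_le_antisym; auto; apply mv_le1. Qed.

Lemma joinC x y : mv_join x y = mv_join y x. Proof. apply oplus_luk. Qed.
Lemma mv_le_joinr x y : y ≤ mv_join x y. Proof. unfold mv_join; apply mv_le_oplusl. Qed.
Lemma mv_le_joinl x y : x ≤ mv_join x y. Proof. rewrite joinC; apply mv_le_joinr. Qed.
Lemma join_timesE x y : mv_join x y = (y ⊙ ¬x) ⊕ x.
Proof. rewrite joinC; unfold mv_join, mv_times; rewrite negK; reflexivity. Qed.
Lemma join_lub x y z : x ≤ z -> y ≤ z -> mv_join x y ≤ z.
Proof.
  intros H1 H2. rewrite join_timesE. pose proof (mv_le_decomp _ _ H1) as E.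
  assert (E' : z = (z ⊙ ¬x) ⊕ x) by (rewrite E at 1; unfold mv_times; rewrite negK; reflexivity).
  rewrite E'. apply oplus_monol. apply times_monol; auto.
Qed.
Lemma meet_lel x y : mv_meet x y ≤ x.
Proof. unfold mv_meet. apply neg_le. rewrite negK. apply mv_le_joinl. Qed.
Lemma meet_ler x y : mv_meet x y ≤ y.
Proof. unfold mv_meet. apply neg_le. rewrite negK. apply mv_le_joinr. Qed.
Lemma meet_glb x y z : z ≤ x -> z ≤ y -> z ≤ mv_meet x y.
Proof. intros; unfold mv_meet. apply neg_le; rewrite negK. apply join_lub; apply neg_anti; auto. Qed.
Lemma meet_timesE x y : mv_meet x y = x ⊙ (x ⇒ y).
Proof.
  unfold mv_meet. rewrite joinC. unfold mv_join, mv_times, mv_imp.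
  rewrite !negK, (oplusC y (¬x)), oplusC. reflexivity.
Qed.
Lemma oplus_times_neg x y : (x ⊕ y) ⊙ ¬y = mv_meet x (¬y).
Proof. unfold mv_meet, mv_join, mv_times. rewrite !negK. reflexivity. Qed.

Lemma neg_meet y z : ¬(mv_meet y z) = mv_join (¬y) (¬z).
Proof. unfold mv_meet; apply negK. Qed.
Lemma times_join_le x y z : x ⊙ (mv_join y z) ≤ mv_join (x ⊙ y) (x ⊙ z).
Proof.
  rewrite timesC. apply residuation.
  apply join_lub; apply residuation; rewrite timesC; [apply mv_le_joinl|apply mv_le_joinr].
Qed.
Lemma meet_oplus_le x y z : mv_meet (x ⊕ y) (x ⊕ z) ≤ x ⊕ mv_meet y z.
Proof.
  apply neg_le. rewrite neg_oplus, neg_meet.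
  apply mv_le_trans with (mv_join (¬x ⊙ ¬y) (¬x ⊙ ¬z)). apply times_join_le.
  rewrite neg_meet, !neg_oplus. apply mv_le_refl.
Qed.
Lemma oplus_meet x y z : x ⊕ mv_meet y z = mv_meet (x ⊕ y) (x ⊕ z).
Proof.
  apply mv_le_antisym.
  - apply meet_glb; rewrite !(oplusC x); apply oplus_monol; [apply meet_lel|apply meet_ler].
  - apply meet_oplus_le.
Qed.
Lemma meet1r x : mv_meet x 1 = x.
Proof. apply mv_le_antisym. apply meet_lel. apply meet_glb. apply mv_le_refl. apply mv_le1. Qed.
Lemma oplus_meet_neg a b : a ⊕ b = a ⊕ mv_meet b (¬a).
Proof. rewrite oplus_meet, oplusN, meet1r; reflexivity. Qed.
Lemma meet_neg_oplus_times a b : b = mv_meet b (¬a) ⊕ (a ⊙ b).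
Proof.
  rewrite meet_timesE. unfold mv_imp.
  assert (H : a ⊙ b ≤ b) by apply times_ler.
  apply mv_le_decomp in H. transitivity (¬(¬b ⊕ (a⊙b)) ⊕ (a⊙b)); [exact H|].
  f_equal. unfold mv_times; rewrite (oplusC (¬a)); reflexivity.
Qed.
Lemma oplus_times_absorb a b : a ⊕ b ⊕ (a ⊙ b) = a ⊕ b.
Proof. rewrite (oplus_meet_neg a b) at 1. rewrite <- oplusA, <- meet_neg_oplus_times. reflexivity. Qed.
Lemma prelinearity x y : mv_join (x ⇒ y) (y ⇒ x) = 1.
Proof.
  assert (H : ¬(¬x ⊕ y) ⊕ (¬y ⊕ x) = ¬y ⊕ x).
  { replace (¬(¬x ⊕ y)) with (x ⊙ ¬y) by (unfold mv_times; rewrite negK; reflexivity).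
    rewrite oplusC, (oplusC (¬y) x). apply oplus_times_absorb. }
  unfold mv_join, mv_imp. rewrite H. apply oplusNl.
Qed.

Lemma join1r x : mv_join x 1 = 1. Proof. apply mv_ge1_eq, mv_le_joinr. Qed.
Lemma join_le_oplus x y : mv_join x y ≤ x ⊕ y.
Proof. apply join_lub; [apply mv_le_oplusr|apply mv_le_oplusl]. Qed.
Lemma join_times_eq1 u v w : mv_join u v = 1 -> mv_join w v = 1 -> mv_join (u ⊙ w) v = 1.
Proof.
  intros H1 H2. apply mv_ge1_eq.
  assert (H : mv_join u v ⊙ mv_join w v ≤ mv_join (u ⊙ w) v).
  { apply residuation. apply join_lub; apply residuation.
    - rewrite timesC. apply residuation. apply join_lub; apply residuation.
      + rewrite timesC. apply mv_le_joinl.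
      + apply mv_le_trans with v. apply times_lel. apply mv_le_joinr.
    - apply mv_le_trans with v. apply times_lel. apply mv_le_joinr. }
  rewrite H1, H2, times1r in H. exact H.
Qed.

Fixpoint mv_pow x (n : nat) : A := match n with O => 1 | S n => x ⊙ mv_pow x n end.
Lemma mv_powD x n m : mv_pow x (n + m) = mv_pow x n ⊙ mv_pow x m.
Proof. induction n; simpl. rewrite times1l; reflexivity. rewrite IHn, timesA; reflexivity. Qed.
Lemma mv_pow_mono x y n : x ≤ y -> mv_pow x n ≤ mv_pow y n.
Proof. intros H; induction n; simpl. apply mv_le_refl. apply times_mono; auto. Qed.
Lemma mv_powS_le x n : mv_pow x (S n) ≤ mv_pow x n. Proof. simpl. apply times_ler. Qed.
Lemma join_pow_eq1 u v n : mv_join u v = 1 -> mv_join (mv_pow u n) v = 1.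
Proof. intros H; induction n; simpl. rewrite joinC; apply join1r. apply join_times_eq1; auto. Qed.
Lemma oplus_pow_eq1 u v n m : mv_join u v = 1 -> mv_pow u n ⊕ mv_pow v m = 1.
Proof.
  intros H. apply join_pow_eq1 with (n:=n) in H. rewrite joinC in H. apply join_pow_eq1 with (n:=m) in H.
  apply mv_ge1_eq. rewrite <- H, joinC. apply join_le_oplus.
Qed.

Lemma times_oplus_le x y z : x ⊙ (y ⊕ z) ≤ (x ⊙ y) ⊕ z.
Proof.
  assert (G : forall w u, w ⊙ ¬z ≤ u -> w ≤ u ⊕ z).
  { intros w u Hw. apply residuation in Hw. unfold mv_imp in Hw. rewrite negK, oplusC in Hw. exact Hw. }
  apply G. rewrite <- timesA. apply times_mono. apply mv_le_refl. rewrite oplus_times_neg. apply meet_lel.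
Qed.
Lemma imp_oplus_le a b c d : (a ⇒ b) ⊙ (c ⇒ d) ≤ (a ⊕ c) ⇒ (b ⊕ d).
Proof.
  apply le_imp_of_times_le.
  apply mv_le_trans with ((a ⇒ b) ⊙ (((c ⇒ d) ⊙ c) ⊕ a)).
  { rewrite <- timesA. apply times_mono. apply mv_le_refl. rewrite (oplusC a c). apply times_oplus_le. }
  apply mv_le_trans with ((a ⇒ b) ⊙ (d ⊕ a)).
  { apply times_mono. apply mv_le_refl. apply oplus_monol. apply modus_ponens. }
  apply mv_le_trans with (((a ⇒ b) ⊙ a) ⊕ d).
  { rewrite (oplusC d a). apply times_oplus_le. }
  rewrite (oplusC b d). rewrite (oplusC _ d). apply mv_le_trans with (d ⊕ b).
  rewrite (oplusC d ((a ⇒ b) ⊙ a)), (oplusC d b). apply oplus_monol. apply modus_ponens. apply mv_le_refl.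
Qed.
Lemma imp_neg_swap a b : (a ⇒ ¬b) = (b ⇒ ¬a). Proof. unfold mv_imp; apply oplusC. Qed.
Lemma oplus_imp c d : c ⊕ d = (¬c ⇒ d). Proof. unfold mv_imp; rewrite negK; reflexivity. Qed.

Lemma filter_1 F : is_filter F -> F 1.
Proof. intros [[x Hx] [Hu _]]. apply Hu with x; auto. apply mv_le1. Qed.
Lemma filter_up F x y : is_filter F -> F x -> x ≤ y -> F y.
Proof. intros [_ [Hu _]]; eauto. Qed.
Lemma filter_times F x y : is_filter F -> F x -> F y -> F (x ⊙ y).
Proof. intros [_ [_ Hm]]; eauto. Qed.
Lemma filter_pow F x n : is_filter F -> F x -> F (mv_pow x n).
Proof. intros HF H; induction n; simpl. apply filter_1; auto. apply filter_times; auto. Qed.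
Lemma proper_filter_not0 F : is_proper_filter F -> ~ F 0.
Proof. intros [HF [x Hx]] H0. apply Hx, filter_up with 0; auto. apply mv_ge0. Qed.
Lemma proper_filter_of_not0 F : is_filter F -> ~ F 0 -> is_proper_filter F.
Proof. intros; split; auto. exists 0; auto. Qed.

Lemma mv_pow_times x y n : mv_pow (x ⊙ y) n = mv_pow x n ⊙ mv_pow y n.
Proof.
  induction n; simpl.
  - rewrite times1r; reflexivity.
  - rewrite IHn, !timesA. f_equal. rewrite <- !timesA, (timesC y). reflexivity.
Qed.

Definition down_directed (S : A -> Prop) : Prop :=
  forall s1 s2, S s1 -> S s2 -> exists s, S s /\ s ≤ s1 /\ s ≤ s2.

Definition generated_filter (S : A -> Prop) (z : A) : Prop :=
  exists n s, S s /\ mv_pow s n ≤ z.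

Lemma generated_filter_filter S : (exists s, S s) -> down_directed S -> is_filter (generated_filter S).
Proof.
  intros [s0 Hs0] Hdir. split; [|split].
  - exists 1, O, s0. split; auto. apply mv_le_refl.
  - intros x y [n [s [Hs Hx]]] Hxy. exists n, s. split; auto. eapply mv_le_trans; eauto.
  - intros x y [n1 [s1 [H1 Hx]]] [n2 [s2 [H2 Hy]]].
    destruct (Hdir s1 s2 H1 H2) as [s [Hs [Hs1 Hs2]]].
    exists (n1 + n2)%nat, s. split; auto. rewrite mv_powD.
    apply times_mono; eapply mv_le_trans; eauto; apply mv_pow_mono; auto.
Qed.

Lemma generated_filter_incl S s : S s -> generated_filter S s.
Proof. intros Hs. exists 1%nat, s. split; auto. simpl. rewrite times1r. apply mv_le_refl. Qed.

(* Otherwise [F] and [z] would generate a proper filter strictly above [F]. *)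
Lemma maximal_filter_neg_pow F z : is_maximal_filter F -> ~ F z -> exists n, F (¬ mv_pow z n).
Proof.
  intros [[HF Hp] Hmax] Hz.
  set (S := fun s => exists f, F f /\ s = f ⊙ z).
  assert (HS : is_filter (generated_filter S)).
  { apply generated_filter_filter.
    - exists (1 ⊙ z), 1. split; auto. apply filter_1; auto.
    - intros s1 s2 [f1 [Hf1 ->]] [f2 [Hf2 ->]]. exists (f1 ⊙ f2 ⊙ z). split.
      + exists (f1 ⊙ f2). split; auto. apply filter_times; auto.
      + split; apply times_monol; [apply times_lel | apply times_ler]. }
  destruct (classic (generated_filter S 0)) as [[n [s [[f [Hf ->]] Hle]]] | H0].
  - exists n. apply filter_up with (mv_pow f n); [exact HF | apply filter_pow; auto |].
    rewrite mv_pow_times in Hle. apply le_imp_of_times_le in Hle. rewrite imp0r in Hle. exact Hle.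
  - exfalso. apply Hz. apply (Hmax (generated_filter S)).
    + apply proper_filter_of_not0; auto.
    + intros x Hx. exists 1%nat, (x ⊙ z). split. exists x; auto. simpl. rewrite times1r. apply times_lel.
    + apply generated_filter_incl. exists 1. split. apply filter_1; auto. rewrite times1l; reflexivity.
Qed.

Lemma maximal_filter_prime F a b : is_maximal_filter F -> F (a ⇒ b) \/ F (b ⇒ a).
Proof.
  intros HM. destruct (classic (F (a ⇒ b))) as [H|H]; auto.
  destruct (classic (F (b ⇒ a))) as [H'|H']; auto. exfalso.
  destruct (maximal_filter_neg_pow F _ HM H) as [n Hn]. destruct (maximal_filter_neg_pow F _ HM H') as [m Hm].
  destruct HM as [[HF Hp] _]. apply (proper_filter_not0 F (conj HF Hp)).
  pose proof (filter_times F _ _ HF Hn Hm) as Hx. rewrite <- neg_oplus in Hx.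
  rewrite (oplus_pow_eq1 _ _ n m (prelinearity a b)), neg1 in Hx. exact Hx.
Qed.
End MV.

Lemma chain_union_proper_filter (A : MVAlgebra) (Ch : (A -> Prop) -> Prop) (X0 : A -> Prop) (x0 : A) :
  Ch X0 -> X0 x0 -> (forall X x, Ch X -> X x -> is_proper_filter X) ->
  (forall X Y, Ch X -> Ch Y -> (forall x, X x -> Y x) \/ (forall x, Y x -> X x)) ->
  is_proper_filter (fun x => exists2 X, Ch X & X x).
Proof.
  intros HX0 Hx0 Hf Htot. apply proper_filter_of_not0; [split; [|split]|].
  - exists x0, X0; auto.
  - intros x y [X HX Hx] Hxy. exists X; auto. eapply filter_up; eauto. apply (Hf X x); auto.
  - intros x y [X HX Hx] [Y HY Hy].
    destruct (Htot X Y HX HY) as [HXY|HYX].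
    + exists Y; auto. apply filter_times; auto. apply (Hf Y y); auto.
    + exists X; auto. apply filter_times; auto. apply (Hf X x); auto.
  - intros [X HX H0]. apply (proper_filter_not0 X (Hf X _ HX H0) H0).
Qed.

(* Zorn's lemma; the empty predicate is admitted to the family so that the union of the empty
   chain belongs to it. *)
Lemma maximal_filter_extends (A : MVAlgebra) (P : A -> Prop) :
  is_proper_filter P -> exists F, is_maximal_filter F /\ forall x, P x -> F x.
Proof.
  intros HP.
  set (PP := fun X : A -> Prop => (forall x, ~ X x) \/ (is_proper_filter X /\ forall x, P x -> X x)).
  destruct (@classical_sets.Zorn_bigcup A PP) as [M [HM Hmax]].
  - intros Ch HCh Htot.
    destruct (classic (exists X x, Ch X /\ X x)) as [[X0 [x0 [HX0 Hx0]]] | Hno].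
    + assert (Hf : forall X x, Ch X -> X x -> is_proper_filter X /\ forall x, P x -> X x).
      { intros X x HX Hx. destruct (HCh X HX) as [He|Hf]; auto. exfalso; apply (He x Hx). }
      right. split.
      * apply (chain_union_proper_filter A Ch X0 x0); auto. intros X x HX Hx. apply (Hf X x HX Hx).
      * intros x Hx. exists X0; auto. apply (Hf X0 x0); auto.
    + left. intros x [X HX Hx]. apply Hno. exists X, x; auto.
  - assert (HMp : is_proper_filter M /\ forall x, P x -> M x).
    { destruct HM as [He|Hf]; auto. exfalso. apply (Hmax P).
      split. intros x Hx; exfalso; apply (He x Hx).
      intros Hsub. destruct HP as [[[x Hx] _] _]. apply (He x), Hsub, Hx.
      right; split; auto. }
    exists M. destruct HMp as [HMp HPM]. split; auto. split; auto.
    intros G HG HMG x Gx. apply NNPP; intros Hn. apply (Hmax G).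
    split. exact HMG. intros Hs. apply Hn, Hs, Gx.
    right; split; auto.
Qed.

(** * Infima, suprema and rationals in [0,1] *)

Lemma inf01_le P z : P z -> 0 <= z <= 1 -> inf01 P <= z.
Proof. intros; destruct (inf01_spec P) as [_ [HH _]]; auto. Qed.
Lemma inf01_ge P s : 0 <= s <= 1 -> (forall z, P z -> 0 <= z <= 1 -> s <= z) -> s <= inf01 P.
Proof. intros; destruct (inf01_spec P) as [_ [_ HH]]; auto. Qed.
Lemma sup01_ge P z : P z -> 0 <= z <= 1 -> z <= sup01 P.
Proof. intros; destruct (sup01_spec P) as [_ [HH _]]; auto. Qed.
Lemma sup01_le P s : 0 <= s <= 1 -> (forall z, P z -> 0 <= z <= 1 -> z <= s) -> sup01 P <= s.
Proof. intros; destruct (sup01_spec P) as [_ [_ HH]]; auto. Qed.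
Lemma inf01_unique P v : is_inf01 P v -> inf01 P = v.
Proof.
  intros [Hr [Hl Hg]]. pose proof (inf01_range P). apply Rle_antisym.
  - apply Hg. auto. intros; apply inf01_le; auto.
  - apply inf01_ge; auto.
Qed.
Lemma sup01_unique P v : is_sup01 P v -> sup01 P = v.
Proof.
  intros [Hr [Hl Hg]]. pose proof (sup01_range P). apply Rle_antisym.
  - apply sup01_le; auto.
  - apply Hg. auto. intros; apply sup01_ge; auto.
Qed.

Ltac minmax_lra := unfold Rmin, Rmax in *; repeat destruct Rle_dec; try lra.

Definition isQ (r : R) := exists q : Q, Q2R q = r.
Lemma isQ_plus r s : isQ r -> isQ s -> isQ (r + s).
Proof. intros [q Hq] [p Hp]; exists (q + p)%Q; rewrite Q2R_plus; subst; auto. Qed.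
Lemma isQ_minus r s : isQ r -> isQ s -> isQ (r - s).
Proof. intros [q Hq] [p Hp]; exists (q - p)%Q; rewrite Q2R_minus; subst; auto. Qed.
Lemma isQ_mult r s : isQ r -> isQ s -> isQ (r * s).
Proof. intros [q Hq] [p Hp]; exists (q * p)%Q; rewrite Q2R_mult; subst; auto. Qed.
Lemma isQ_IZR z : isQ (IZR z).
Proof. exists (inject_Z z). unfold Q2R; simpl. field. Qed.
Lemma isQ_0 : isQ 0. Proof. apply (isQ_IZR 0). Qed.
Lemma isQ_1 : isQ 1. Proof. apply (isQ_IZR 1). Qed.
Lemma isQ_INR n : isQ (INR n). Proof. rewrite INR_IZR_INZ; apply isQ_IZR. Qed.
Lemma isQ_1minus r : isQ r -> isQ (1 - r). Proof. intros; apply isQ_minus; auto; apply isQ_1. Qed.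
Lemma isQ_inv r : isQ r -> r <> 0 -> isQ (/ r).
Proof.
  intros [q Hq] Hr. exists (/ q)%Q. rewrite Q2R_inv; subst; auto.
  intros Hq0. apply Hr. rewrite (Qeq_eqR _ _ Hq0). unfold Q2R; simpl; field.
Qed.
Lemma isQ_max r s : isQ r -> isQ s -> isQ (Rmax r s).
Proof. intros; unfold Rmax; destruct Rle_dec; auto. Qed.
Lemma isQ_min r s : isQ r -> isQ s -> isQ (Rmin r s).
Proof. intros; unfold Rmin; destruct Rle_dec; auto. Qed.
Lemma isQ_q01 (c : Q01) : isQ (q01val c). Proof. exists (proj1_sig c); reflexivity. Qed.
Lemma isQ_oplus r s : isQ r -> isQ s -> isQ (Rmin (r + s) 1).
Proof. intros; apply isQ_min; [apply isQ_plus; auto | apply isQ_1]. Qed.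
Lemma isQ_imp r s : isQ r -> isQ s -> isQ (Rmin (1 - r + s) 1).
Proof. intros; apply isQ_oplus; [apply isQ_1minus|]; auto. Qed.

Lemma inv_INR_S n : 0 < / INR (S n) <= 1 /\ isQ (/ INR (S n)).
Proof.
  assert (1 <= INR (S n)) by (rewrite S_INR; pose proof (pos_INR n); lra).
  split. split. apply Rinv_0_lt_compat; lra.
  rewrite <- Rinv_1. apply Rinv_le_contravar; lra.
  apply isQ_inv. apply isQ_INR. lra.
Qed.

Lemma rational_dense a b : a < b -> exists r, isQ r /\ a < r < b.
Proof.
  intros Hab.
  destruct (archimed (/ (b - a))) as [Hn1 _].
  set (n := up (/ (b - a))) in *.
  assert (Hpos : 0 < / (b - a)) by (apply Rinv_0_lt_compat; lra).
  assert (Hn : 0 < IZR n) by lra.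
  destruct (archimed (a * IZR n)) as [Hk1 Hk2].
  set (k := up (a * IZR n)) in *.
  exists (IZR k / IZR n). split.
  - unfold Rdiv; apply isQ_mult. apply isQ_IZR. apply isQ_inv. apply isQ_IZR. lra.
  - split.
    + apply Rmult_lt_reg_r with (IZR n); auto. unfold Rdiv. rewrite Rmult_assoc, Rinv_l, Rmult_1_r; lra.
    + apply Rmult_lt_reg_r with (IZR n); auto. unfold Rdiv. rewrite Rmult_assoc, Rinv_l, Rmult_1_r by lra.
      assert (H1 : 1 < (b - a) * IZR n).
      { apply Rmult_lt_reg_l with (/ (b - a)); auto.
        rewrite <- Rmult_assoc, Rinv_l, Rmult_1_l, Rmult_1_r by lra. lra. }
      nra.
Qed.
Lemma rational_dense01 a b : a < b -> a < 1 -> 0 < b -> exists r, isQ r /\ 0 <= r <= 1 /\ a < r < b.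
Proof.
  intros H1 H2 H3. destruct (rational_dense (Rmax a 0) (Rmin b 1)) as [r [Hr Hr2]].
  - minmax_lra.
  - exists r; repeat split; auto; revert Hr2; minmax_lra.
Qed.

Lemma q01_of_rational r : isQ r -> 0 <= r <= 1 -> exists c : Q01, q01val c = r.
Proof.
  intros [q Hq] H. assert (H0 : (0 <= q <= 1)%Q).
  { split; apply Rle_Qle; subst;
      [replace (Q2R 0) with 0 by (unfold Q2R; simpl; field)
      | replace (Q2R 1) with 1 by (unfold Q2R; simpl; field)]; lra. }
  exists (exist _ q H0). exact Hq.
Qed.
Definition q01_zero : Q01.
Proof. exists 0%Q. split; unfold Qle; simpl; lia. Defined.
Lemma q01_zero_val : q01val q01_zero = 0.
Proof. unfold q01val, Q2R; simpl; field. Qed.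

(** * Values at maximal filters *)

Section Valuation.
Variable A : MVAlgebra.
Variable h : A -> R.
Hypothesis h_range : forall a, 0 <= h a <= 1.
Hypothesis h_oplus : forall a b, h (a ⊕ b) = Rmin (h a + h b) 1.
Hypothesis h_neg : forall a, h (¬ a) = 1 - h a.

Lemma valuation0 : h mv_zero = 0.
Proof.
  pose proof (h_oplus mv_zero (¬ mv_zero)) as H. rewrite oplus0l, h_neg in H.
  pose proof (h_range mv_zero). revert H; minmax_lra.
Qed.
Lemma valuation1 : h mv_one = 1. Proof. unfold mv_one; rewrite h_neg, valuation0; lra. Qed.
Lemma valuation_times a b : h (a ⊙ b) = Rmax 0 (h a + h b - 1).
Proof.
  unfold mv_times. rewrite h_neg, h_oplus, !h_neg.
  pose proof (h_range a); pose proof (h_range b). minmax_lra.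
Qed.
Lemma valuation_imp a b : h (a ⇒ b) = Rmin (1 - h a + h b) 1.
Proof. unfold mv_imp. rewrite h_oplus, h_neg. reflexivity. Qed.
Lemma valuation_mono a b : a ≤ b -> h a <= h b.
Proof.
  intros H. unfold mv_le in H. pose proof (f_equal h H) as E. fold (mv_imp a b) in E.
  rewrite valuation_imp, valuation1 in E.
  pose proof (h_range a); pose proof (h_range b). revert E; minmax_lra.
Qed.
Lemma valuation_pow_ge z n : h (mv_pow z n) >= 1 - INR n * (1 - h z).
Proof.
  induction n; simpl mv_pow. rewrite valuation1; simpl; lra.
  rewrite valuation_times, S_INR. pose proof (h_range z). pose proof (h_range (mv_pow z n)). minmax_lra; nra.
Qed.
End Valuation.

Section Constants.
Variable A : Pavelka.

(* The constant [cst r] is meaningful only for rational [r] in [0,1]; every lemma asks for that. *)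
Definition cst (r : R) : A := pv_cst (epsilon (inhabits q01_zero) (fun c => q01val c = r)).

Lemma pv_cst_ext (c c' : Q01) : q01val c = q01val c' -> pv_cst c = @pv_cst A c'.
Proof.
  intros H. rewrite <- (oplus0r (pv_cst c)).
  rewrite <- (pv_cst_zero A q01_zero q01_zero_val).
  apply pv_cst_add. rewrite q01_zero_val. pose proof (q01_range c). minmax_lra.
Qed.
Lemma cst_spec r : isQ r -> 0 <= r <= 1 -> exists c, cst r = pv_cst c /\ q01val c = r.
Proof.
  intros H1 H2. destruct (q01_of_rational r H1 H2) as [c Hc].
  eexists. split. reflexivity. apply epsilon_spec. exists c; auto.
Qed.
Lemma cst_q01 (c : Q01) : cst (q01val c) = pv_cst c.
Proof.
  destruct (cst_spec (q01val c) (isQ_q01 c) (q01_range c)) as [c' [E H]].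
  rewrite E. apply pv_cst_ext; auto.
Qed.
Lemma cst0 : cst 0 = mv_zero.
Proof. destruct (cst_spec 0 isQ_0 ltac:(lra)) as [c [E H]]. rewrite E. apply pv_cst_zero; auto. Qed.
Lemma neg_cst r : isQ r -> 0 <= r <= 1 -> ¬ (cst r) = cst (1 - r).
Proof.
  intros H1 H2. destruct (cst_spec r H1 H2) as [c [E H]].
  destruct (cst_spec (1 - r) (isQ_1minus _ H1) ltac:(lra)) as [c' [E' H']].
  rewrite E, E'. apply pv_cst_neg. lra.
Qed.
Lemma cst1 : cst 1 = mv_one.
Proof. unfold mv_one. rewrite <- cst0, neg_cst; [f_equal; lra| apply isQ_0| lra]. Qed.
Lemma oplus_cst r s : isQ r -> 0 <= r <= 1 -> isQ s -> 0 <= s <= 1 ->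
  cst r ⊕ cst s = cst (Rmin (r + s) 1).
Proof.
  intros Qr Hr Qs Hs. destruct (cst_spec r Qr Hr) as [c [Er Vr]].
  destruct (cst_spec s Qs Hs) as [c' [Es Vs]].
  destruct (cst_spec (Rmin (r + s) 1) (isQ_oplus _ _ Qr Qs) ltac:(minmax_lra)) as [c'' [E V]].
  rewrite Er, Es, E. apply pv_cst_add. rewrite Vr, Vs, V. reflexivity.
Qed.
Lemma imp_cst r s : isQ r -> 0 <= r <= 1 -> isQ s -> 0 <= s <= 1 ->
  cst r ⇒ cst s = cst (Rmin (1 - r + s) 1).
Proof.
  intros. unfold mv_imp. rewrite neg_cst by auto.
  rewrite oplus_cst; [reflexivity | apply isQ_1minus; auto | lra | auto | auto].
Qed.
Lemma times_cst r s : isQ r -> 0 <= r <= 1 -> isQ s -> 0 <= s <= 1 ->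
  cst r ⊙ cst s = cst (Rmax 0 (r + s - 1)).
Proof.
  intros. unfold mv_times. rewrite (neg_cst r), (neg_cst s) by auto.
  rewrite oplus_cst by (auto using isQ_1minus; lra).
  rewrite neg_cst.
  - f_equal. minmax_lra.
  - apply isQ_oplus; apply isQ_1minus; auto.
  - minmax_lra.
Qed.
Lemma pow_cst r n : isQ r -> 0 <= r <= 1 -> mv_pow (cst r) n = cst (Rmax 0 (1 - INR n * (1 - r))).
Proof.
  intros Hq Hr. induction n; simpl mv_pow.
  - simpl. rewrite <- cst1. f_equal. minmax_lra.
  - rewrite IHn, times_cst; auto.
    + f_equal. rewrite S_INR. replace ((INR n + 1) * (1 - r)) with (INR n * (1 - r) + (1 - r)) by ring.
      generalize (INR n * (1 - r)); intro m. minmax_lra.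
    + apply isQ_max. apply isQ_0. apply isQ_1minus. apply isQ_mult. apply isQ_INR. apply isQ_1minus; auto.
    + assert (0 <= INR n * (1 - r)) by (apply Rmult_le_pos; [apply pos_INR|lra]). minmax_lra.
Qed.
End Constants.
Arguments cst {A}.

Lemma imp_trans {A : MVAlgebra} (a b c : A) : (a ⇒ b) ⊙ (b ⇒ c) ≤ (a ⇒ c).
Proof.
  apply le_imp_of_times_le. rewrite <- timesA, (timesC (b ⇒ c) a), timesA, timesC.
  apply mv_le_trans with ((b ⇒ c) ⊙ b); [|apply modus_ponens].
  apply times_mono; [apply mv_le_refl | apply modus_ponens].
Qed.
Lemma imp_contra {A : MVAlgebra} (a b : A) : (¬ a ⇒ b) = (¬ b ⇒ a).
Proof. unfold mv_imp; rewrite !negK; apply oplusC. Qed.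
Lemma times_negr {A : MVAlgebra} (x : A) : x ⊙ ¬ x = mv_zero.
Proof. unfold mv_times. rewrite negK, oplusNl. apply neg1. Qed.

Section QuotientEmbedding.
Variable A : Pavelka.
Variable F : A -> Prop.
Variable k : A -> R.
Hypothesis Hk : quotient_embedding A F k.

Lemma qe_cst r : isQ r -> 0 <= r <= 1 -> k (cst r) = r.
Proof. intros H1 H2. destruct (cst_spec A r H1 H2) as [c [E H]]. rewrite E, <- H. apply Hk. Qed.
Lemma qe_eq1 z : k z = 1 <-> F z.
Proof.
  destruct Hk as [Hr [Ho [Hn [_ Hker]]]].
  rewrite <- (valuation1 A k Hr Ho Hn), Hker, imp1r, imp1l, times1l. reflexivity.
Qed.
Lemma qe_le a b : k a <= k b <-> F (a ⇒ b).
Proof.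
  destruct Hk as [Hr [Ho [Hn _]]].
  rewrite <- qe_eq1, (valuation_imp A k Ho Hn). pose proof (Hr a); pose proof (Hr b). split; minmax_lra.
Qed.
Lemma qe_cst_le r x : isQ r -> 0 <= r <= 1 -> (r <= k x <-> F (cst r ⇒ x)).
Proof. intros. rewrite <- qe_le, qe_cst; auto. reflexivity. Qed.
End QuotientEmbedding.

(* Two embeddings agree on every rational threshold, hence everywhere by density. *)
Lemma quotient_embedding_unique A F k1 k2 :
  quotient_embedding A F k1 -> quotient_embedding A F k2 -> forall x, k1 x = k2 x.
Proof.
  intros H1 H2 x.
  assert (G : forall k k', quotient_embedding A F k -> quotient_embedding A F k' -> ~ k x < k' x).
  { intros k k' Hk Hk' Hlt. pose proof (proj1 Hk x); pose proof (proj1 Hk' x).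
    destruct (rational_dense01 (k x) (k' x)) as [q [Hq [Hq1 Hq2]]]; try lra.
    assert (Hle : q <= k' x) by lra. apply (qe_cst_le A F k' Hk' q x Hq Hq1) in Hle.
    apply (qe_cst_le A F k Hk q x Hq Hq1) in Hle. lra. }
  destruct (Rtotal_order (k1 x) (k2 x)) as [H|[H|H]]; auto.
  - exfalso; apply (G k1 k2); auto.
  - exfalso; apply (G k2 k1); auto.
Qed.

Section QuotientEmbeddingExists.
Variable A : Pavelka.
Variable F : A -> Prop.
Hypothesis HM : is_maximal_filter F.

Let HF : is_filter F. Proof. apply HM. Qed.
Let Hp : ~ F mv_zero. Proof. apply proper_filter_not0. apply HM. Qed.

(* Maximal filters are archimedean: a power of [cst r], [r < 1], reaches [0]. *)
Lemma maximal_filter_cst r : isQ r -> 0 <= r <= 1 -> F (cst r) -> r = 1.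
Proof.
  intros Hq Hr HFr. destruct (Req_dec r 1) as [E|E]; auto. exfalso.
  destruct (INR_archimed (1 - r) 1) as [n Hn]. lra.
  apply Hp. apply (filter_pow F _ n HF) in HFr. rewrite pow_cst in HFr; auto.
  replace (Rmax 0 (1 - INR n * (1 - r))) with 0 in HFr by minmax_lra.
  rewrite cst0 in HFr. exact HFr.
Qed.

Definition filter_val (x : A) : R :=
  sup01 (fun t => isQ t /\ 0 <= t <= 1 /\ F (cst t ⇒ x)).

Lemma filter_val_range x : 0 <= filter_val x <= 1. Proof. apply sup01_range. Qed.
Lemma filter_val_ge q x : isQ q -> 0 <= q <= 1 -> F (cst q ⇒ x) -> q <= filter_val x.
Proof. intros; apply sup01_ge; tauto. Qed.
Lemma filter_val_le p x : isQ p -> 0 <= p <= 1 -> F (x ⇒ cst p) -> filter_val x <= p.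
Proof.
  intros Hq Hr H. apply sup01_le; auto. intros t [Ht [Ht1 HFt]] _.
  destruct (Rle_lt_dec t p) as [|Hlt]; auto. exfalso.
  assert (HH : F (cst t ⇒ cst p)).
  { apply filter_up with ((cst t ⇒ x) ⊙ (x ⇒ cst p)); auto. apply filter_times; auto. apply imp_trans. }
  rewrite imp_cst in HH; auto. apply maximal_filter_cst in HH.
  - minmax_lra.
  - apply isQ_imp; auto.
  - minmax_lra.
Qed.
Lemma filter_val_gt t x : t < filter_val x -> exists q, isQ q /\ 0 <= q <= 1 /\ t < q /\ F (cst q ⇒ x).
Proof.
  intros Ht. pose proof (filter_val_range x) as Hr0. destruct (Req_dec (filter_val x) 0) as [E|E].
  - exists 0. repeat split; try lra. apply isQ_0. rewrite cst0, imp0l. apply filter_1; auto.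
  - destruct (rational_dense01 t (filter_val x)) as [q [Hq [Hq1 Hq2]]]; try lra.
    exists q. repeat split; auto; try lra.
    destruct (maximal_filter_prime F (cst q) x HM) as [H|H]; auto.
    apply filter_val_le in H; auto. lra.
Qed.
Lemma filter_val_lt t x : filter_val x < t -> exists p, isQ p /\ 0 <= p <= 1 /\ p < t /\ F (x ⇒ cst p).
Proof.
  intros Ht. pose proof (filter_val_range x) as Hr0. destruct (Req_dec (filter_val x) 1) as [E|E].
  - exists 1. repeat split; try lra. apply isQ_1. rewrite cst1, imp1r. apply filter_1; auto.
  - destruct (rational_dense01 (filter_val x) t) as [q [Hq [Hq1 Hq2]]]; try lra.
    exists q. repeat split; auto; try lra.
    destruct (maximal_filter_prime F x (cst q) HM) as [H|H]; auto.
    apply filter_val_ge in H; auto. lra.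
Qed.

Lemma filter_val_neg x : filter_val (¬ x) = 1 - filter_val x.
Proof.
  pose proof (filter_val_range x); pose proof (filter_val_range (¬ x)).
  destruct (Rtotal_order (filter_val (¬ x)) (1 - filter_val x)) as [Hl|[E|Hg]]; auto; exfalso.
  - destruct (filter_val_lt _ (¬ x) Hl) as [p [Hq [Hp1 [Hp2 HFp]]]].
    rewrite imp_contra, neg_cst in HFp; auto.
    apply filter_val_ge in HFp; auto using isQ_1minus; lra.
  - destruct (filter_val_gt _ (¬ x) Hg) as [p [Hq [Hp1 [Hp2 HFp]]]].
    rewrite imp_neg_swap, neg_cst in HFp; auto.
    apply filter_val_le in HFp; auto using isQ_1minus; lra.
Qed.

Lemma filter_val_oplus x y : filter_val (x ⊕ y) = Rmin (filter_val x + filter_val y) 1.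
Proof.
  pose proof (filter_val_range x); pose proof (filter_val_range y); pose proof (filter_val_range (x ⊕ y)).
  destruct (Rtotal_order (filter_val (x ⊕ y)) (Rmin (filter_val x + filter_val y) 1))
    as [Hl|[E|Hg]]; auto; exfalso.
  - set (d := Rmin (filter_val x + filter_val y) 1 - filter_val (x ⊕ y)).
    destruct (filter_val_gt (filter_val x - d/2) x) as [q1 [Q1 [R1 [L1 F1]]]]. unfold d; minmax_lra.
    destruct (filter_val_gt (filter_val y - d/2) y) as [q2 [Q2 [R2 [L2 F2]]]]. unfold d; minmax_lra.
    assert (HH : F (cst (Rmin (q1 + q2) 1) ⇒ x ⊕ y)).
    { rewrite <- oplus_cst; auto. apply filter_up with ((cst q1 ⇒ x) ⊙ (cst q2 ⇒ y)); auto.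
      apply filter_times; auto. apply imp_oplus_le. }
    apply filter_val_ge in HH; [unfold d in *; minmax_lra | apply isQ_oplus; auto | minmax_lra].
  - set (d := filter_val (x ⊕ y) - Rmin (filter_val x + filter_val y) 1).
    destruct (filter_val_lt (filter_val x + d/2) x) as [q1 [Q1 [R1 [L1 F1]]]]. unfold d; minmax_lra.
    destruct (filter_val_lt (filter_val y + d/2) y) as [q2 [Q2 [R2 [L2 F2]]]]. unfold d; minmax_lra.
    assert (HH : F (x ⊕ y ⇒ cst (Rmin (q1 + q2) 1))).
    { rewrite <- oplus_cst; auto. apply filter_up with ((x ⇒ cst q1) ⊙ (y ⇒ cst q2)); auto.
      apply filter_times; auto. apply imp_oplus_le. }
    apply filter_val_le in HH; [unfold d in *; minmax_lra | apply isQ_oplus; auto | minmax_lra].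
Qed.

Lemma filter_val_pv_cst (c : Q01) : filter_val (pv_cst c) = q01val c.
Proof.
  pose proof (q01_range c). rewrite <- cst_q01.
  assert (Hc : F (cst (q01val c) ⇒ cst (q01val c)))
    by (unfold mv_imp; rewrite oplusNl; apply filter_1; auto).
  apply Rle_antisym; [apply filter_val_le | apply filter_val_ge]; auto using isQ_q01.
Qed.

Lemma filter_val_eq1 z : filter_val z = 1 <-> F z.
Proof.
  assert (Hin : forall w, F w -> filter_val w = 1).
  { intros w Hw. apply Rle_antisym. apply filter_val_range.
    apply filter_val_ge. apply isQ_1. lra. rewrite cst1, imp1l; auto. }
  split; auto.
  intros Hz. apply NNPP; intros Hn. destruct (maximal_filter_neg_pow F z HM Hn) as [n Hn'].
  apply Hin in Hn'. rewrite filter_val_neg in Hn'.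
  pose proof (valuation_pow_ge A filter_val filter_val_range filter_val_oplus filter_val_neg z n).
  rewrite Hz in H. lra.
Qed.

Lemma quotient_embedding_exists : exists h, quotient_embedding A F h.
Proof.
  exists filter_val.
  split; [apply filter_val_range|split; [apply filter_val_oplus|
    split; [apply filter_val_neg|split; [apply filter_val_pv_cst|]]]].
  intros a b. rewrite <- filter_val_eq1.
  pose proof (filter_val_range a); pose proof (filter_val_range b).
  rewrite (valuation_times A filter_val filter_val_range filter_val_oplus filter_val_neg),
    !(valuation_imp A filter_val filter_val_oplus filter_val_neg).
  split; intros; minmax_lra.
Qed.
End QuotientEmbeddingExists.

Lemma qval_quotient_embedding (A : Pavelka) (F : SpecM A) : quotient_embedding A (proj1_sig F) (qval F).
Proof.
  destruct (quotient_embedding_exists A (proj1_sig F) (proj2_sig F)) as [h Hh].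
  replace (qval F) with h; auto.
  apply functional_extensionality. intros x. unfold qval.
  destruct (epsilon_spec (inhabits 0) (fun r => exists h, quotient_embedding A (proj1_sig F) h /\ h x = r))
    as [h' [Hh' E]].
  - exists (h x), h; auto.
  - rewrite <- E. apply (quotient_embedding_unique A (proj1_sig F)); auto.
Qed.

Section Qval.
Context {A : Pavelka} (F : SpecM A).
Let Hq := qval_quotient_embedding A F.
Let Hr := proj1 Hq.
Let Ho := proj1 (proj2 Hq).
Let Hn := proj1 (proj2 (proj2 Hq)).

Lemma qval_range a : 0 <= qval F a <= 1. Proof. apply Hr. Qed.
Lemma qval_oplus a b : qval F (a ⊕ b) = Rmin (qval F a + qval F b) 1. Proof. apply Ho. Qed.
Lemma qval_neg a : qval F (¬ a) = 1 - qval F a. Proof. apply Hn. Qed.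
Lemma qval0 : qval F mv_zero = 0. Proof. apply (valuation0 A _ Hr Ho Hn). Qed.
Lemma qval1 : qval F mv_one = 1. Proof. apply (valuation1 A _ Hr Ho Hn). Qed.
Lemma qval_times a b : qval F (a ⊙ b) = Rmax 0 (qval F a + qval F b - 1).
Proof. apply (valuation_times A _ Hr Ho Hn). Qed.
Lemma qval_imp a b : qval F (a ⇒ b) = Rmin (1 - qval F a + qval F b) 1.
Proof. apply (valuation_imp A _ Ho Hn). Qed.
Lemma qval_mono a b : a ≤ b -> qval F a <= qval F b. Proof. apply (valuation_mono A _ Hr Ho Hn). Qed.
Lemma qval_pow_ge z n : qval F (mv_pow z n) >= 1 - INR n * (1 - qval F z).
Proof. apply (valuation_pow_ge A _ Hr Ho Hn). Qed.
Lemma qval_cst r : isQ r -> 0 <= r <= 1 -> qval F (cst r) = r. Proof. apply (qe_cst A _ _ Hq). Qed.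
Lemma qval_le a b : qval F a <= qval F b <-> proj1_sig F (a ⇒ b). Proof. apply (qe_le A _ _ Hq). Qed.
Lemma qval_pow_le0 a m : mv_pow a m ≤ mv_zero -> qval F a <= 1 - / INR (S m).
Proof.
  intros H. assert (H' : mv_pow a (S m) ≤ mv_zero) by (eapply mv_le_trans; [apply mv_powS_le|exact H]).
  apply qval_mono in H'. rewrite qval0 in H'.
  pose proof (qval_pow_ge a (S m)).
  assert (1 <= INR (S m)) by (rewrite S_INR; pose proof (pos_INR m); lra).
  apply Rmult_le_reg_l with (INR (S m)). lra.
  rewrite Rmult_minus_distr_l, Rinv_r by lra. lra.
Qed.
End Qval.

(** * Semisimplicity *)

Section MVHom.
Variables A B : MVAlgebra.
Variable p : A -> B.
Hypothesis Hp : mv_hom A B p.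
Lemma hom_oplus a b : p (a ⊕ b) = p a ⊕ p b. Proof. apply Hp. Qed.
Lemma hom_neg a : p (¬ a) = ¬ p a. Proof. apply Hp. Qed.
Lemma hom0 : p mv_zero = mv_zero. Proof. apply Hp. Qed.
Lemma hom1 : p mv_one = mv_one. Proof. unfold mv_one; rewrite hom_neg, hom0; reflexivity. Qed.
Lemma hom_times a b : p (a ⊙ b) = p a ⊙ p b.
Proof. unfold mv_times; rewrite hom_neg, hom_oplus, !hom_neg; reflexivity. Qed.
Lemma hom_join a b : p (mv_join a b) = mv_join (p a) (p b).
Proof. unfold mv_join; rewrite hom_oplus, hom_neg, hom_oplus, hom_neg; reflexivity. Qed.
Lemma hom_le a b : a ≤ b -> p a ≤ p b.
Proof. unfold mv_le; intros H. rewrite <- hom_neg, <- hom_oplus, H; apply hom1. Qed.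

Hypothesis p_onto : forall b, exists a, p a = b.

Lemma hom_kernel_filter : is_filter (fun a => p a = mv_one).
Proof.
  split; [|split].
  - exists mv_one. apply hom1.
  - intros a b Ha Hab. apply mv_ge1_eq. rewrite <- Ha. apply hom_le; auto.
  - intros a b Ha Hb. rewrite hom_times, Ha, Hb. apply times1r.
Qed.

Lemma hom_image_filter G : is_filter G -> is_filter (fun b => exists a, G a /\ p a = b).
Proof.
  intros HG. split; [|split].
  - exists (p mv_one), mv_one. split; auto. apply filter_1; auto.
  - intros b c [a [Ga Ea]] Hbc. destruct (p_onto c) as [a' Ea'].
    exists (mv_join a a'). split.
    + apply filter_up with a; auto. apply mv_le_joinl.
    + rewrite hom_join, Ea', Ea.
      apply mv_le_antisym; [apply join_lub; auto; apply mv_le_refl | apply mv_le_joinr].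
  - intros b c [a [Ga Ea]] [a' [Ga' Ea']]. exists (a ⊙ a'). split.
    + apply filter_times; auto.
    + rewrite hom_times, Ea, Ea'; reflexivity.
Qed.

(* The image of a proper filter above the kernel is [{1}] by simplicity, not all of [B]. *)
Lemma simple_hom_kernel_maximal : mv_simple B -> is_maximal_filter (fun a => p a = mv_one).
Proof.
  intros HB. split.
  - split. apply hom_kernel_filter. exists mv_zero. rewrite hom0. apply HB.
  - intros G HG HFG z Gz.
    destruct (proj2 HB _ (hom_image_filter G (proj1 HG))) as [H1|H2].
    + apply H1. exists z; auto.
    + exfalso. destruct (H2 mv_zero) as [a [Ga Ea]].
      assert (HFa : p (¬ a) = mv_one) by (rewrite hom_neg, Ea; reflexivity).
      apply (proper_filter_not0 G HG). rewrite <- (times_negr a).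
      apply filter_times; auto. apply HG.
Qed.
End MVHom.

Lemma semisimple_le (A : Pavelka) : pv_semisimple A -> forall x y : A,
  (forall F : SpecM A, qval F x <= qval F y) -> x ≤ y.
Proof.
  intros [K [B [e [Hs [Hh [Hinj Hon]]]]]] x y Hxy.
  apply Hinj. apply functional_extensionality_dep. intros k.
  set (p := fun a : A => e a k).
  change (p (x ⇒ y) = p mv_one). rewrite (hom1 _ _ p (Hh k)).
  pose proof (simple_hom_kernel_maximal _ _ p (Hh k) (Hon k) (Hs k)) as HM.
  apply (qval_le (exist _ _ HM)), Hxy.
Qed.

(** * Fuzzy relations *)

Lemma Rtimes_le_Rimp a b c : 0 <= a <= 1 -> 0 <= b <= 1 -> 0 <= c <= 1 ->
  (Rtimes a b <= c <-> b <= Rimp a c).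
Proof. intros; unfold Rtimes, Rimp; split; minmax_lra. Qed.
Lemma Rimp_range a b : 0 <= a <= 1 -> 0 <= b <= 1 -> 0 <= Rimp a b <= 1.
Proof. intros; unfold Rimp; minmax_lra. Qed.
Lemma Rtimes_range a b : 0 <= a <= 1 -> 0 <= b <= 1 -> 0 <= Rtimes a b <= 1.
Proof. intros; unfold Rtimes; minmax_lra. Qed.
Lemma Rimp_exchange a b c : 0 <= a <= 1 -> 0 <= b <= 1 ->
  Rimp a (Rimp b c) = Rimp b (Rimp a c).
Proof. intros; unfold Rimp; minmax_lra. Qed.

Lemma Rimp_inf01 (K : Type) (u v : K -> R) r : 0 <= r <= 1 -> (forall k, 0 <= u k <= 1) ->
  (forall k, v k = Rimp r (u k)) ->
  Rimp r (inf01 (fun z => exists k, z = u k)) = inf01 (fun z => exists k, z = v k).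
Proof.
  intros Hr Hu Hv. set (P := fun z => exists k, z = u k). pose proof (inf01_range P) as HP.
  symmetry. apply inf01_unique. split; [|split].
  - apply Rimp_range; auto.
  - intros z [k ->] _. rewrite Hv.
    assert (inf01 P <= u k) by (apply inf01_le; [exists k |]; auto).
    unfold Rimp; minmax_lra.
  - intros s Hs Hlb. destruct (Rle_lt_dec s (1 - r)) as [Hle|Hlt].
    + unfold Rimp; minmax_lra.
    + assert (s - (1 - r) <= inf01 P).
      { apply inf01_ge; [lra|]. intros z [k ->] _.
        assert (Hk : s <= v k) by (apply Hlb; [exists k | rewrite Hv; apply Rimp_range]; auto).
        rewrite Hv in Hk. revert Hk; unfold Rimp; minmax_lra. }
      unfold Rimp; minmax_lra.
Qed.

Lemma power_le (K : Type) (x y : PowerPav K) :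
  x ≤ y <-> forall i, proj1_sig (x i) <= proj1_sig (y i).
Proof.
  unfold mv_le, mv_one. simpl. split.
  - intros H i. apply (f_equal (fun f => proj1_sig (f i))) in H.
    unfold p_oplus, p_neg, p_zero in H; simpl in H.
    pose proof (proj2_sig (x i)); pose proof (proj2_sig (y i)). simpl in *. revert H; minmax_lra.
  - intros H. apply functional_extensionality; intro i. apply U01_eq.
    unfold p_oplus, p_neg, p_zero; simpl. specialize (H i). minmax_lra.
Qed.

Section FuzzyRelation.
Variables I J : Type.
Variable Rel : I -> J -> U01.
Let rg (u : U01) : 0 <= proj1_sig u <= 1 := proj2_sig u.

Lemma fR01_mono (x y : PowerPav I) : x ≤ y -> fR01 Rel x ≤ fR01 Rel y.
Proof.
  rewrite !power_le. intros H j. simpl. unfold fR. apply inf01_ge. apply inf01_range.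
  intros z [i ->] _. apply Rle_trans with (Rimp (proj1_sig (Rel i j)) (proj1_sig (x i))).
  - apply inf01_le. exists i; auto. apply Rimp_range; apply rg.
  - specialize (H i). unfold Rimp; minmax_lra.
Qed.
Lemma gR01_mono (x y : PowerPav J) : x ≤ y -> gR01 Rel x ≤ gR01 Rel y.
Proof.
  rewrite !power_le. intros H i. simpl. unfold gR. apply sup01_le. apply sup01_range.
  intros z [j ->] _. apply Rle_trans with (Rtimes (proj1_sig (Rel i j)) (proj1_sig (y j))).
  - specialize (H j). unfold Rtimes; minmax_lra.
  - apply sup01_ge. exists j; auto. apply Rtimes_range; apply rg.
Qed.
Lemma fR01_gR01_adjoint (y : PowerPav I) (x : PowerPav J) : x ≤ fR01 Rel y <-> gR01 Rel x ≤ y.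
Proof.
  rewrite !power_le. simpl. unfold fR, gR. split.
  - intros H i. apply sup01_le. apply rg. intros z [j ->] _.
    apply Rtimes_le_Rimp; try apply rg. eapply Rle_trans. apply H.
    apply inf01_le. exists i; auto. apply Rimp_range; apply rg.
  - intros H j. apply inf01_ge. apply rg. intros z [i ->] _.
    apply Rtimes_le_Rimp; try apply rg. eapply Rle_trans. 2: apply H.
    apply sup01_ge. exists j; auto. apply Rtimes_range; apply rg.
Qed.
Lemma fR01_imp_cst (x : PowerPav I) (r : Q01) :
  mv_imp (pv_cst r) (fR01 Rel x) = fR01 Rel (mv_imp (pv_cst r) x).
Proof.
  apply functional_extensionality; intro j. apply U01_eq. simpl.
  unfold mv_imp; simpl. unfold p_oplus, p_neg, p_cst, fR; simpl.
  pose proof (q01_range r) as Hr.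
  rewrite Rmin_comm. change (Rmin 1 (1 - ?a + ?b)) with (Rimp a b).
  apply Rimp_inf01; auto.
  - intros i. apply Rimp_range; apply rg.
  - intros i. rewrite Rmin_comm. apply Rimp_exchange; auto.
Qed.
End FuzzyRelation.

(** * Strong adjunctions between semisimple Pavelka algebras *)

Section StrongAdjunction.
Variables A B : Pavelka.
Variable f : A -> B.
Variable g : B -> A.
Hypothesis Hadj : strong_adj A B f g.

Lemma adj_f_mono a b : a ≤ b -> f a ≤ f b. Proof. apply Hadj. Qed.
Lemma adj_g_mono a b : a ≤ b -> g a ≤ g b. Proof. apply Hadj. Qed.
Lemma adjunction (a : A) (b : B) : b ≤ f a <-> g b ≤ a. Proof. apply Hadj. Qed.
Lemma adj_unit (b : B) : b ≤ f (g b). Proof. apply adjunction, mv_le_refl. Qed.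
Lemma adj_counit (a : A) : g (f a) ≤ a. Proof. apply adjunction, mv_le_refl. Qed.
Lemma adj_f1 : f mv_one = mv_one. Proof. apply mv_ge1_eq, adjunction, mv_le1. Qed.
Lemma adj_g0 : g mv_zero ≤ mv_zero. Proof. apply adjunction, mv_ge0. Qed.
Lemma adj_f_imp_cst r a : isQ r -> 0 <= r <= 1 -> f (cst r ⇒ a) = cst r ⇒ f a.
Proof.
  intros H1 H2. destruct (cst_spec A r H1 H2) as [c [E V]]. destruct (cst_spec B r H1 H2) as [c' [E' V']].
  rewrite E, E'. replace (@pv_cst B c') with (@pv_cst B c) by (apply pv_cst_ext; congruence).
  symmetry. apply Hadj.
Qed.
Lemma adj_g_times_cst r b : isQ r -> 0 <= r <= 1 -> g (cst r ⊙ b) ≤ cst r ⊙ g b.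
Proof.
  intros. apply adjunction. rewrite timesC. apply times_le_of_le_imp.
  rewrite <- adj_f_imp_cst by auto. apply adjunction.
  apply le_imp_of_times_le. rewrite timesC. apply mv_le_refl.
Qed.
Lemma adj_g_oplus_cst r b : isQ r -> 0 <= r <= 1 -> g (cst r ⊕ b) ≤ (¬ cst r ⇒ g b).
Proof.
  intros. apply adjunction. rewrite neg_cst, adj_f_imp_cst; auto using isQ_1minus; try lra.
  rewrite <- neg_cst by auto. rewrite oplus_imp. apply imp_mono. apply mv_le_refl. apply adj_unit.
Qed.
Lemma adj_f_meet a b : mv_meet (f a) (f b) ≤ f (mv_meet a b).
Proof.
  apply adjunction. apply meet_glb.
  - apply mv_le_trans with (g (f a)). apply adj_g_mono, meet_lel. apply adj_counit.
  - apply mv_le_trans with (g (f b)). apply adj_g_mono, meet_ler. apply adj_counit.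
Qed.
Lemma adj_g_join a b : g (mv_join a b) ≤ mv_join (g a) (g b).
Proof.
  apply adjunction. apply join_lub.
  - apply mv_le_trans with (f (g a)). apply adj_unit. apply adj_f_mono, mv_le_joinl.
  - apply mv_le_trans with (f (g b)). apply adj_unit. apply adj_f_mono, mv_le_joinr.
Qed.

Definition adj_rel (F : SpecM A) (G : SpecM B) : R :=
  inf01 (fun z => exists a : A, z = Rimp (qval G (f a)) (qval F a)).

Lemma adj_rel_range F G : 0 <= adj_rel F G <= 1. Proof. apply inf01_range. Qed.
Lemma adj_rel_le F G a : adj_rel F G <= Rimp (qval G (f a)) (qval F a).
Proof. apply inf01_le. exists a; auto. apply Rimp_range; apply qval_range. Qed.
Lemma adj_rel_ge F G rho : 0 <= rho <= 1 -> (forall a, rho + qval G (f a) - 1 <= qval F a) ->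
  rho <= adj_rel F G.
Proof.
  intros Hr H. apply inf01_ge; auto. intros z [a ->] _. specialize (H a).
  pose proof (qval_range G (f a)); pose proof (qval_range F a). unfold Rimp; minmax_lra.
Qed.


Section LowerWitness.
Hypothesis HsA : pv_semisimple A.
Variable x : A.
Variable G : SpecM B.
Variable s : R.
Hypothesis Qs : isQ s.
Hypothesis Rs : 0 <= s <= 1.
Hypothesis Hs : qval G (f x) < s.

(* A maximal filter containing these elements makes [x/F <= s] while forcing [adj_rel F G] up. *)
Definition lower_witness_gens (z : A) : Prop :=
  exists h, qval G (f h) = 1 /\ z = (x ⇒ cst s) ⊙ ((cst s ⇒ x) ⇒ h).

Lemma lower_witness_gens_directed : down_directed lower_witness_gens.
Proof.
  intros z1 z2 [h1 [H1 ->]] [h2 [H2 ->]]. exists ((x ⇒ cst s) ⊙ ((cst s ⇒ x) ⇒ mv_meet h1 h2)).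
  split; [exists (mv_meet h1 h2); split; auto | split].
  - apply Rle_antisym; [apply qval_range|].
    apply Rle_trans with (qval G (f h1 ⊙ f h2)).
    + rewrite qval_times, H1, H2. minmax_lra.
    + apply qval_mono. eapply mv_le_trans; [|apply adj_f_meet].
      apply meet_glb; [apply times_lel | apply times_ler].
  - apply times_mono; [apply mv_le_refl | apply imp_mono; [apply mv_le_refl | apply meet_lel]].
  - apply times_mono; [apply mv_le_refl | apply imp_mono; [apply mv_le_refl | apply meet_ler]].
Qed.

(* If a power of a generator vanished, semisimplicity would give [cst s ⊙ (cst e ⊕ h) ≤ x];
   pushing this through [f] yields [s <= qval G (f x)]. *)
Lemma lower_witness_proper : ~ generated_filter lower_witness_gens mv_zero.
Proof.
  intros [m [z [[h [Hh ->]] Hpw]]].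
  destruct (inv_INR_S m) as [He Qe]. set (e := / INR (S m)) in *.
  assert (Hle : cst s ⊙ (cst e ⊕ h) ≤ x).
  { apply semisimple_le; auto. intros F. pose proof (qval_pow_le0 F _ m Hpw) as Hb. fold e in Hb.
    rewrite qval_times, !qval_imp, qval_cst in Hb by auto.
    rewrite qval_times, qval_oplus, !qval_cst by (auto; lra).
    pose proof (qval_range F x); pose proof (qval_range F h). revert Hb. minmax_lra. }
  rewrite timesC in Hle. apply le_imp_of_times_le in Hle.
  rewrite oplus_imp, neg_cst in Hle by (auto; lra).
  apply adj_f_mono in Hle. rewrite !adj_f_imp_cst in Hle by (auto using isQ_1minus; lra).
  apply qval_mono with (F := G) in Hle.
  rewrite !qval_imp, !qval_cst, Hh in Hle by (auto using isQ_1minus; lra).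
  revert Hle; minmax_lra.
Qed.

Lemma lower_witness : exists F : SpecM A, Rimp (adj_rel F G) (qval F x) <= s.
Proof.
  destruct (maximal_filter_extends _ (generated_filter lower_witness_gens)) as [F [HM Hgen]].
  { apply proper_filter_of_not0; [|apply lower_witness_proper].
    apply generated_filter_filter; [|apply lower_witness_gens_directed].
    exists ((x ⇒ cst s) ⊙ ((cst s ⇒ x) ⇒ mv_one)), mv_one. split; auto.
    rewrite adj_f1. apply qval1. }
  set (FF := exist _ F HM : SpecM A).
  assert (Hgen' : forall h, qval G (f h) = 1 -> F ((x ⇒ cst s) ⊙ ((cst s ⇒ x) ⇒ h))).
  { intros h Hh. apply Hgen, generated_filter_incl. exists h; auto. }
  assert (Hx : qval FF x <= s).
  { rewrite <- (qval_cst FF s) by auto. apply qval_le.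
    apply filter_up with ((x ⇒ cst s) ⊙ ((cst s ⇒ x) ⇒ mv_one)); [apply HM | | apply times_lel].
    apply Hgen'. rewrite adj_f1. apply qval1. }
  set (rho := 1 - s + qval FF x).
  assert (Hrho : rho <= adj_rel FF G).
  { apply adj_rel_ge. pose proof (qval_range FF x); unfold rho; lra.
    intros a. apply Rnot_lt_le; intros Ha.
    pose proof (qval_range FF a). pose proof (qval_range G (f a)). unfold rho in *.
    destruct (rational_dense01 (qval FF a + s - qval FF x) (qval G (f a)))
      as [r [Qr [Rr [Lr1 Lr2]]]]; try lra.
    assert (Hh : qval G (f (cst r ⇒ a)) = 1)
      by (rewrite adj_f_imp_cst, qval_imp, qval_cst by auto; minmax_lra).
    apply Hgen' in Hh.
    assert (Hh' : F ((cst s ⇒ x) ⇒ (cst r ⇒ a)))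
      by (eapply filter_up; [apply HM | exact Hh | apply times_ler]).
    apply (qval_le FF) in Hh'. rewrite !qval_imp, !qval_cst in Hh' by auto.
    revert Hh'; minmax_lra. }
  exists FF. pose proof (adj_rel_range FF G). revert Hrho; unfold Rimp, rho; minmax_lra.
Qed.
End LowerWitness.

Lemma qval_adj_f (HsA : pv_semisimple A) (x : A) (G : SpecM B) :
  qval G (f x) = inf01 (fun z => exists F : SpecM A, z = Rimp (adj_rel F G) (qval F x)).
Proof.
  symmetry; apply inf01_unique. split; [apply qval_range|split].
  - intros z [F ->] _. pose proof (adj_rel_le F G x). pose proof (adj_rel_range F G).
    pose proof (qval_range F x). pose proof (qval_range G (f x)).
    revert H; unfold Rimp; minmax_lra.
  - intros s' Hs' Hlb. apply Rnot_lt_le; intros Hlt. pose proof (qval_range G (f x)).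
    destruct (rational_dense01 (qval G (f x)) s') as [s [Qs [Rs [Ls1 Ls2]]]]; try lra.
    destruct (lower_witness HsA x G s Qs Rs Ls1) as [F HF].
    assert (s' <= Rimp (adj_rel F G) (qval F x)).
    { apply Hlb; [exists F; auto | apply Rimp_range; [apply adj_rel_range | apply qval_range]]. }
    lra.
Qed.

Section UpperWitness.
Hypothesis HsB : pv_semisimple B.
Variable y : B.
Variable F : SpecM A.
Variable t : R.
Hypothesis Qt : isQ t.
Hypothesis Rt : 0 < t <= 1.
Hypothesis Ht : t < qval F (g y).

Definition upper_witness_gens (z : B) : Prop :=
  exists d, qval F (g d) = 0 /\ z = (cst t ⇒ y) ⊙ (d ⇒ y ⊙ ¬ cst t).

Lemma upper_witness_gens_directed : down_directed upper_witness_gens.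
Proof.
  intros z1 z2 [d1 [H1 ->]] [d2 [H2 ->]]. exists ((cst t ⇒ y) ⊙ (mv_join d1 d2 ⇒ y ⊙ ¬ cst t)).
  split; [exists (mv_join d1 d2); split; auto | split].
  - apply Rle_antisym; [|apply qval_range].
    apply Rle_trans with (qval F (g d1 ⊕ g d2)).
    + apply qval_mono. eapply mv_le_trans; [apply adj_g_join | apply join_le_oplus].
    + rewrite qval_oplus, H1, H2. minmax_lra.
  - apply times_mono; [apply mv_le_refl | apply imp_mono; [apply mv_le_joinl | apply mv_le_refl]].
  - apply times_mono; [apply mv_le_refl | apply imp_mono; [apply mv_le_joinr | apply mv_le_refl]].
Qed.

(* Dually, a vanishing power would give [y ≤ cst t' ⊕ d] with [t' < t],
   whence [qval F (g y) <= t']. *)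
Lemma upper_witness_proper : ~ generated_filter upper_witness_gens mv_zero.
Proof.
  intros [m [z [[d [Hd ->]] Hpw]]].
  destruct (inv_INR_S m) as [He Qe]. set (e := / INR (S m)) in *.
  set (t' := Rmax 0 (t - e)).
  assert (Qt' : isQ t') by (apply isQ_max; [apply isQ_0 | apply isQ_minus; auto]).
  assert (Rt' : 0 <= t' <= 1) by (unfold t'; minmax_lra).
  assert (Hle : y ≤ cst t' ⊕ d).
  { apply semisimple_le; auto. intros G. pose proof (qval_pow_le0 G _ m Hpw) as Hb. fold e in Hb.
    rewrite qval_times, !qval_imp, qval_times, qval_neg, qval_cst in Hb by (auto; lra).
    rewrite qval_oplus, qval_cst by auto.
    pose proof (qval_range G y); pose proof (qval_range G d). unfold t'. revert Hb. minmax_lra. }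
  pose proof (mv_le_trans _ _ _ (adj_g_mono _ _ Hle) (adj_g_oplus_cst t' d Qt' Rt')) as Hg.
  apply qval_mono with (F := F) in Hg. rewrite qval_imp, qval_neg, qval_cst, Hd in Hg by auto.
  unfold t' in Hg. revert Hg; minmax_lra.
Qed.

Lemma upper_witness : exists G : SpecM B, t <= Rtimes (adj_rel F G) (qval G y).
Proof.
  assert (Hg0 : qval F (g mv_zero) = 0).
  { apply Rle_antisym; [|apply qval_range]. rewrite <- (qval0 F). apply qval_mono, adj_g0. }
  destruct (maximal_filter_extends _ (generated_filter upper_witness_gens)) as [G [HM Hgen]].
  { apply proper_filter_of_not0; [|apply upper_witness_proper].
    apply generated_filter_filter; [|apply upper_witness_gens_directed].
    exists ((cst t ⇒ y) ⊙ (mv_zero ⇒ y ⊙ ¬ cst t)), mv_zero. split; auto. }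
  set (GG := exist _ G HM : SpecM B).
  assert (Hgen' : forall d, qval F (g d) = 0 -> G ((cst t ⇒ y) ⊙ (d ⇒ y ⊙ ¬ cst t))).
  { intros d Hd. apply Hgen, generated_filter_incl. exists d; auto. }
  assert (Hy : t <= qval GG y).
  { rewrite <- (qval_cst GG t) by (auto; lra). apply qval_le.
    eapply filter_up; [apply HM | apply (Hgen' _ Hg0) | apply times_lel]. }
  pose proof (qval_range GG y).
  set (rho := 1 - qval GG y + t).
  assert (Hrho : rho <= adj_rel F GG).
  { apply adj_rel_ge. unfold rho; lra.
    intros a. apply Rnot_lt_le; intros Ha.
    pose proof (qval_range F a). pose proof (qval_range GG (f a)). unfold rho in *.
    destruct (rational_dense01 (qval F a) (qval GG (f a) - qval GG y + t))
      as [p [Qp [Rp [Lp1 Lp2]]]]; try lra.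
    assert (Hd : qval F (g (cst (1 - p) ⊙ f a)) = 0).
    { apply Rle_antisym; [|apply qval_range].
      eapply Rle_trans; [apply qval_mono, adj_g_times_cst; auto using isQ_1minus; lra|].
      rewrite qval_times, qval_cst by (auto using isQ_1minus; lra).
      pose proof (qval_mono F _ _ (adj_counit a)). pose proof (qval_range F (g (f a))). minmax_lra. }
    apply Hgen' in Hd.
    assert (Hd' : G (cst (1 - p) ⊙ f a ⇒ y ⊙ ¬ cst t))
      by (eapply filter_up; [apply HM | exact Hd | apply times_ler]).
    apply (qval_le GG) in Hd'.
    rewrite !qval_times, qval_neg, !qval_cst in Hd' by (auto using isQ_1minus; lra).
    revert Hd'; minmax_lra. }
  exists GG. pose proof (adj_rel_range F GG). revert Hrho; unfold Rtimes, rho; minmax_lra.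
Qed.
End UpperWitness.

Lemma qval_adj_g (HsB : pv_semisimple B) (y : B) (F : SpecM A) :
  qval F (g y) = sup01 (fun z => exists G : SpecM B, z = Rtimes (adj_rel F G) (qval G y)).
Proof.
  symmetry; apply sup01_unique. split; [apply qval_range|split].
  - intros z [G ->] _. pose proof (adj_rel_le F G (g y)). pose proof (adj_rel_range F G).
    pose proof (qval_mono G _ _ (adj_unit y)).
    pose proof (qval_range F (g y)). pose proof (qval_range G y). pose proof (qval_range G (f (g y))).
    revert H; unfold Rimp, Rtimes; minmax_lra.
  - intros s' Hs' Hub. apply Rnot_lt_le; intros Hlt. pose proof (qval_range F (g y)).
    destruct (rational_dense01 s' (qval F (g y))) as [t [Qt [Rt [Lt1 Lt2]]]]; try lra.
    destruct (upper_witness HsB y F t Qt ltac:(lra) Lt2) as [G HG].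
    assert (Rtimes (adj_rel F G) (qval G y) <= s').
    { apply Hub; [exists G; auto | apply Rtimes_range; [apply adj_rel_range | apply qval_range]]. }
    lra.
Qed.

End StrongAdjunction.

Theorem theorem6 :
  (forall (I J : Type) (Rel : I -> J -> U01),
      strong_adj (PowerPav I) (PowerPav J) (fR01 Rel) (gR01 Rel)) /\
  (forall (A B : Pavelka) (f : A -> B) (g : B -> A),
      pv_semisimple A -> pv_semisimple B -> strong_adj A B f g ->
      exists Rel : SpecM A -> SpecM B -> U01,
        (forall (F : SpecM A) (G : SpecM B),
            proj1_sig (Rel F G) =
            inf01 (fun z => exists a : A, z = Rimp (qval G (f a)) (qval F a))) /\
        (forall x : A, nmap B (f x) = fR Rel (nmap A x)) /\
        (forall y : B, nmap A (g y) = gR Rel (nmap B y))).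
Proof.
  split.
  - intros I J Rel. split; [|split; [|split]].
    + apply fR01_mono.
    + apply gR01_mono.
    + apply fR01_gR01_adjoint.
    + intros; apply fR01_imp_cst.
  - intros A B f g HsA HsB Hadj.
    exists (fun F G => exist _ (adj_rel A B f F G) (adj_rel_range A B f F G)).
    split; [|split].
    + reflexivity.
    + intros x. apply functional_extensionality; intro G. apply (qval_adj_f A B f g Hadj HsA).
    + intros y. apply functional_extensionality; intro F. apply (qval_adj_g A B f g Hadj HsB).
Qed.
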